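(* Let $\varphi_1,\varphi_2\colon\mathbb{R}^n\to\overline{\mathbb{R}}$ be proper nearly convex functions. If $\mathrm{ri}(\mathrm{dom}\,\varphi_1)\cap\mathrm{ri}(\mathrm{dom}\,\varphi_2)\neq \emptyset$, then $$\partial(\varphi_1+\varphi_2)(\bar x)=\partial\varphi_1 (\bar x)+\partial\varphi_2 (\bar x)$$ for all $\bar x\in \mathrm{dom}\,\varphi_1\cap\mathrm{dom}\,\varphi_2$.
   Context: $\overline{\mathbb{R}}=[-\infty,\infty]$; proper means nonempty domain $\mathrm{dom}\,\varphi=\{x\mid\varphi(x)<\infty\}$ and never $-\infty$. A set $D$ is nearly convex if there is a convex $E$ with $E\subset D\subset\overline{E}$; a function is nearly convex if its epigraph is nearly convex. $\mathrm{ri}\,D=\{a\in D\mid\exists\delta>0,\ B(a;\delta)\cap\mathrm{aff}\,D\subset D\}$. For $\bar x\in\mathrm{dom}\,\psi$, $\partial\psi(\bar x)=\{\xi\in\mathbb{R}^n\mid\langle\xi,x-\bar x\rangle\le\psi(x)-\psi(\bar x)\ \forall x\in\mathbb{R}^n\}$. Sums of sets are Minkowski sums. *)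

From HB Require Import structures.
From mathcomp Require Import all_boot all_order all_algebra.
From mathcomp Require Import all_classical all_reals ereal.
Set Implicit Arguments. Unset Strict Implicit. Unset Printing Implicit Defensive.
Import Order.TTheory GRing.Theory Num.Theory.
Local Open Scope classical_set_scope.
Local Open Scope ring_scope.

Section Defs.
Variables (R : realType) (n : nat).
Local Notation V := 'rV[R]_n.

Definition dotv (u v : V) : R := \sum_(i < n) u 0 i * v 0 i.

Definition eball (a : V) (d : R) : set V :=
  [set x | dotv (x - a) (x - a) < d ^+ 2].

Definition dist2p (p q : V * R) : R :=
  dotv (p.1 - q.1) (p.1 - q.1) + (p.2 - q.2) ^+ 2.

Definition pclosure (E : set (V * R)) : set (V * R) :=
  [set p | forall e : R, 0 < e -> exists2 q, E q & dist2p p q < e ^+ 2].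

Definition pconvex (E : set (V * R)) : Prop :=
  forall p q, E p -> E q -> forall t : R, 0 <= t <= 1 ->
    E (t *: p.1 + (1 - t) *: q.1, t * p.2 + (1 - t) * q.2).

Definition nearly_convex_pset (D : set (V * R)) : Prop :=
  exists E, pconvex E /\ E `<=` D /\ D `<=` pclosure E.

Definition epi (phi : V -> \bar R) : set (V * R) :=
  [set p | (phi p.1 <= p.2%:E)%E].

Definition nearly_convex_fun (phi : V -> \bar R) : Prop :=
  nearly_convex_pset (epi phi).

Definition dom (phi : V -> \bar R) : set V := [set x | (phi x < +oo)%E].

Definition proper_fun (phi : V -> \bar R) : Prop :=
  dom phi !=set0 /\ (forall x, phi x <> -oo%E).

Definition aff (D : set V) : set V :=
  [set a | exists m (p : 'I_m -> V) (w : 'I_m -> R),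
     (forall i, D (p i)) /\ \sum_(i < m) w i = 1 /\ a = \sum_(i < m) w i *: p i].

Definition ri (D : set V) : set V :=
  [set a | D a /\ exists2 d : R, 0 < d & eball a d `&` aff D `<=` D].

Definition subdiff (psi : V -> \bar R) (xb : V) : set V :=
  [set xi | dom psi xb /\
     forall x, ((dotv xi (x - xb))%:E <= psi x - psi xb)%E].

Definition msum (A B : set V) : set V :=
  [set z | exists a b, A a /\ B b /\ z = a + b].

End Defs.

(* Choose convex sets E_i with E_i ⊆ epi φ_i ⊆ cl E_i, put a_i = φ_i(x̄) and let
   ξ ∈ ∂(φ1 + φ2)(x̄).  The convex set
     C = {(u - w, l + m - a_1 - a_2 - <ξ, w - x̄>) | (u, l) ∈ E_1, (w, m) ∈ E_2}
   lies above height 0 over the origin because ξ is a subgradient of the sum.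
   The relative interior of dom φ_i is contained in that of the projection of E_i,
   so a common point z of ri dom φ1 and ri dom φ2 makes the projection of C
   absorbing along each of its own directions.  Extending a linear minorant of C
   one dimension at a time, as in the Hahn-Banach theorem, yields ξ1 with
   <ξ1, x> <= s on C; passing to closures, ξ1 ∈ ∂φ1(x̄), ξ - ξ1 ∈ ∂φ2(x̄). *)

From mathcomp Require Import all_boot all_order all_algebra.
From mathcomp Require Import all_classical all_reals ereal.
From mathcomp Require Import ring lra zify.
Set Implicit Arguments. Unset Strict Implicit. Unset Printing Implicit Defensive.
Import Order.TTheory GRing.Theory Num.Theory.
Local Open Scope classical_set_scope.
Local Open Scope ring_scope.

Lemma ler_addgt0_scale (R : realFieldType) (x y S : R) :
  0 <= S -> (forall e, 0 < e -> x <= y + e * S) -> x <= y.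
Proof.
move=> S_ge0 h; apply/ler_addgt0Pr => e e_gt0.
have S1_gt0 : 0 < S + 1 by lra.
apply: le_trans (h (e / (S + 1)) (divr_gt0 e_gt0 S1_gt0)) _.
rewrite lerD2l mulrAC ler_pdivrMr //; nra.
Qed.

Lemma exists_between (R : realType) (A B : set R) : A !=set0 -> B !=set0 ->
  (forall a b, A a -> B b -> a <= b) -> exists c, ubound A c /\ lbound B c.
Proof.
move=> A0 [b0 Bb0] AB; exists (sup A); split.
  by apply: sup_upper_bound; split => //; exists b0 => a Aa; apply: AB.
by move=> b Bb; apply: ge_sup => // a Aa; apply: AB.
Qed.

Lemma norm_sum_mul_le (R : numDomainType) k (x c : 'I_k -> R) e :
  (forall i, `|x i| <= e) -> `|\sum_i x i * c i| <= e * \sum_i `|c i|.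
Proof.
move=> x_le; apply: le_trans (ler_norm_sum _ _ _) _; rewrite mulr_sumr.
by apply: ler_sum => i _; rewrite normrM; apply: ler_wpM2r.
Qed.

Section DotProduct.
Variables (R : realType) (n : nat).
Local Notation V := 'rV[R]_n.

Lemma dotvC (u v : V) : dotv u v = dotv v u.
Proof. by apply: eq_bigr => i _; rewrite mulrC. Qed.

Lemma dotvDr (u x y : V) : dotv u (x + y) = dotv u x + dotv u y.
Proof. by rewrite /dotv -big_split; apply: eq_bigr => i _; rewrite mxE mulrDr. Qed.

Lemma dotvDl (u x y : V) : dotv (x + y) u = dotv x u + dotv y u.
Proof. by rewrite dotvC dotvDr !(dotvC u). Qed.

Lemma dotvZr (u x : V) c : dotv u (c *: x) = c * dotv u x.
Proof. by rewrite /dotv mulr_sumr; apply: eq_bigr => i _; rewrite mxE mulrCA. Qed.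

Lemma dotvZl (u x : V) c : dotv (c *: x) u = c * dotv x u.
Proof. by rewrite dotvC dotvZr dotvC. Qed.

Lemma dotvNr (u x : V) : dotv u (- x) = - dotv u x.
Proof. by rewrite -scaleN1r dotvZr mulN1r. Qed.

Lemma dotvNl (u x : V) : dotv (- x) u = - dotv x u.
Proof. by rewrite dotvC dotvNr dotvC. Qed.

Lemma dotvBr (u x y : V) : dotv u (x - y) = dotv u x - dotv u y.
Proof. by rewrite dotvDr dotvNr. Qed.

Lemma dotvBl (u x y : V) : dotv (x - y) u = dotv x u - dotv y u.
Proof. by rewrite dotvDl dotvNl. Qed.

Lemma dotv0r (u : V) : dotv u 0 = 0.
Proof. by rewrite /dotv big1 // => i _; rewrite mxE mulr0. Qed.

Lemma dotvZZ (x : V) c : dotv (c *: x) (c *: x) = c ^+ 2 * dotv x x.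
Proof. by rewrite dotvZl dotvZr mulrA expr2. Qed.

Lemma dotvNN (x : V) : dotv (- x) (- x) = dotv x x.
Proof. by rewrite dotvNl dotvNr opprK. Qed.

Lemma dotv_ge0 (x : V) : 0 <= dotv x x.
Proof. by apply: sumr_ge0 => i _; rewrite -expr2 sqr_ge0. Qed.

Lemma sqr_coord_le_dotv (x : V) i : x 0 i ^+ 2 <= dotv x x.
Proof.
rewrite /dotv (bigD1 i) //= -expr2 lerDl; apply: sumr_ge0 => j _.
by rewrite -expr2 sqr_ge0.
Qed.

Lemma dotvDD_le (x y : V) : dotv (x + y) (x + y) <= 2 * dotv x x + 2 * dotv y y.
Proof.
rewrite /dotv !mulr_sumr -big_split /=; apply: ler_sum => i _.
rewrite !mxE; have := sqr_ge0 (x 0 i - y 0 i); nra.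
Qed.

Lemma eball_sym (x y : V) d : eball x d y -> eball y d x.
Proof. by rewrite /eball /= -dotvNN opprB. Qed.

Lemma eball_center (x : V) d : 0 < d -> eball x d x.
Proof. by move=> d_gt0; rewrite /eball /= subrr dotv0r exprn_gt0. Qed.

Lemma eball_coord_lt (x y : V) d i : 0 < d -> eball x d y -> `|y 0 i - x 0 i| < d.
Proof.
move=> d_gt0 /(le_lt_trans (sqr_coord_le_dotv _ i)); rewrite !mxE => h.
by rewrite ltr_norml; apply/andP; split; nra.
Qed.

Definition mx_abs_sum m p (M : 'M[R]_(m, p)) := \sum_i \sum_j `|M i j|.

Lemma mx_abs_sum_ge0 m p (M : 'M[R]_(m, p)) : 0 <= mx_abs_sum M.
Proof. by apply: sumr_ge0 => i _; apply: sumr_ge0. Qed.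

Lemma norm_mulmx_le m (x y : V) (M : 'M[R]_(n, m)) d j : 0 < d -> eball x d y ->
  `|((y - x) *m M) 0 j| <= d * mx_abs_sum M.
Proof.
move=> d_gt0 xy; have coord_le i : `|(y - x) 0 i| <= d.
  by rewrite !mxE; apply/ltW; apply: eball_coord_lt.
rewrite mxE; apply: le_trans (norm_sum_mul_le (fun i => M i j) coord_le) _.
apply: ler_wpM2l; first exact: ltW.
rewrite /mx_abs_sum exchange_big (bigD1 j) //= lerDl.
by apply: sumr_ge0 => l _; apply: sumr_ge0.
Qed.

Lemma norm_dotv_le (u x y : V) d : 0 < d -> eball x d y ->
  `|dotv u (y - x)| <= d * \sum_i `|u 0 i|.
Proof.
move=> d_gt0 xy; rewrite dotvC; apply: norm_sum_mul_le => i.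
by rewrite !mxE; apply/ltW; apply: eball_coord_lt.
Qed.

Lemma exists_small_scale (x : V) d : 0 < d ->
  exists2 e, 0 < e & forall t, 0 < t <= e -> dotv (t *: x) (t *: x) < d ^+ 2.
Proof.
move=> d_gt0; have X_ge0 := dotv_ge0 x; set X := dotv x x in X_ge0 *.
have X1_gt0 : 0 < X + 1 by lra.
exists (d / (X + 1)) => [|t /andP[t_gt0 t_le]]; first exact: divr_gt0.
rewrite dotvZZ -/X; have tX_le : t * (X + 1) <= d by rewrite -ler_pdivlMr.
have tX_gt0 : 0 < t * (X + 1) by rewrite mulr_gt0.
apply: lt_le_trans (_ : (t * (X + 1)) ^+ 2 <= d ^+ 2); last first.
  by apply: lerXn2r; rewrite ?nnegrE ?(ltW tX_gt0) ?(ltW d_gt0).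
rewrite exprMn ltr_pM2l ?exprn_gt0 //; nra.
Qed.

End DotProduct.

Section ConvexSets.
Variables (R : realType) (n : nat).
Local Notation V := 'rV[R]_n.

Definition vconvex (P : set V) := forall a b, P a -> P b ->
  forall t : R, 0 <= t <= 1 -> P (t *: a + (1 - t) *: b).

Definition vclosure (P : set V) : set V :=
  [set x | forall e, 0 < e -> exists2 q, P q & eball x e q].

Lemma vconvex_comb (P : set V) p0 k (d : 'I_k -> V) (w : 'I_k -> R) :
  vconvex P -> P p0 -> (forall i, P (p0 + d i)) ->
  (forall i, 0 <= w i) -> \sum_i w i <= 1 -> P (p0 + \sum_i w i *: d i).
Proof.
move=> convP Pp0; elim: k d w => [|k IH] d w Pd w_ge0 w_le1.
  by rewrite big_ord0 addr0.
rewrite big_ord_recr /=; rewrite big_ord_recr /= in w_le1.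
set wm := w ord_max in w_le1 *; set W := \sum_(i < k) _ in w_le1 *.
have wm_ge0 : 0 <= wm := w_ge0 _.
have W_ge0 : 0 <= W by apply: sumr_ge0.
have [wm1|wm_neq1] := eqVneq wm 1.
  have /psumr_eq0P W0 : W = 0 by apply/eqP; rewrite eq_le W_ge0; lra.
  rewrite big1 => [|i _]; last by rewrite W0 ?scale0r.
  by rewrite add0r wm1 scale1r.
have m_gt0 : 0 < 1 - wm by rewrite subr_gt0 lt_neqAle wm_neq1; lra.
have Pq : P (p0 + \sum_i (w (widen_ord (leqnSn k) i) / (1 - wm)) *:
                          d (widen_ord (leqnSn k) i)).
  apply: IH => [i|i|]; [exact: Pd | exact: divr_ge0 (w_ge0 _) (ltW m_gt0) | ].
  by rewrite -mulr_suml -/W ler_pdivrMr // mul1r; lra.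
have wm01 : 0 <= 1 - wm <= 1 by apply/andP; split; lra.
have := convP _ _ Pq (Pd ord_max) _ wm01.
have -> : 1 - (1 - wm) = wm by ring.
rewrite !scalerDr scaler_sumr addrACA -scalerDl subrK scale1r.
congr (P (p0 + (_ + _))); apply: eq_bigr => i _.
by rewrite scalerA mulrC divfK ?lt0r_neq0.
Qed.

Lemma sub_aff (D : set V) : D `<=` aff D.
Proof.
move=> z Dz; exists 1%N, (fun _ => z), (fun _ => 1); split => //.
by rewrite !big_ord1 scale1r.
Qed.

Lemma aff_subset (D1 D2 : set V) : D1 `<=` D2 -> aff D1 `<=` aff D2.
Proof. by move=> D12 y [m [p [w [Dp wy]]]]; exists m, p, w; split => // i; apply: D12. Qed.

Lemma aff_extend (D : set V) y c t : aff D y -> D c -> aff D (y + t *: (y - c)).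
Proof.
case=> m [p [w [Dp [w1 ->]]]] Dc.
pose p' (i : 'I_(m + 1)) := if fintype.split i is inl j then p j else c.
pose w' (i : 'I_(m + 1)) := if fintype.split i is inl j then (1 + t) * w j else - t.
exists (m + 1)%N, p', w'; split => [i|]; first by rewrite /p'; case: fintype.split.
have splitl j : fintype.split (lshift 1 j) = inl j := unsplitK (inl j).
have splitr j : fintype.split (rshift m j) = inr j := unsplitK (inr j).
rewrite !big_split_ord /= !big_ord1 /p' /w' !splitr.
under eq_bigr do rewrite splitl.
under [X in _ /\ _ = X + _]eq_bigr do rewrite splitl -scalerA.
rewrite -mulr_sumr -scaler_sumr w1; split; first by ring.
by rewrite scalerBr scaleNr scalerDl scale1r addrA.
Qed.

Lemma ri_extend (P : set V) z u : ri P z -> P u ->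
  exists2 e, 0 < e & forall t, 0 < t <= e -> P (z + t *: (z - u)).
Proof.
move=> [Pz [d d_gt0 ballP]] Pu; have [e e_gt0 small] := exists_small_scale (z - u) d_gt0.
exists e => // t te; apply: ballP; split; last exact: aff_extend (sub_aff Pz) Pu.
by rewrite /eball /= addrC addKr; apply: small.
Qed.

End ConvexSets.

Section RowSpaces.
Variables (R : realType) (n : nat).
Local Notation V := 'rV[R]_n.

Lemma ltn_rank_col_mx k (W : 'M[R]_(k, n)) (x : V) :
  ~~ (x <= W)%MS -> (\rank W < \rank (col_mx W x))%N.
Proof.
move=> xW; have : (W < W + x)%MS by rewrite ltmxE addsmxSl /= addsmx_sub submx_refl.
by rewrite ltmxErank => /andP[_]; rewrite (addsmxE W x).
Qed.

Lemma exists_saturated_mx (Good : forall k, 'M[R]_(k, n) -> Prop) (S : set V)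
    k0 (W0 : 'M_(k0, n)) : Good k0 W0 ->
  (forall k (W : 'M_(k, n)) x, Good k W -> S x -> ~~ (x <= W)%MS ->
     Good (k + 1)%N (col_mx W x)) ->
  exists k (W : 'M_(k, n)), Good k W /\ forall x, S x -> (x <= W)%MS.
Proof.
move=> Good0 Good_col.
suff saturate d : forall k (W : 'M_(k, n)), Good k W -> (n - \rank W <= d)%N ->
    exists k (W : 'M_(k, n)), Good k W /\ forall x, S x -> (x <= W)%MS.
  exact: saturate Good0 (leq_subr _ _).
elim: d => [|d IH] k W GoodW codim;
  have [[x [Sx xW]]|sat] := pselect (exists x, S x /\ ~~ (x <= W)%MS);
  try by exists k, W; split => // x Sx; apply/negPn/negP => xW; apply: sat; exists x.
all: have rank_lt := ltn_rank_col_mx xW; have rank_le := rank_leq_col (col_mx W x).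
  by lia.
by apply: (IH _ (col_mx W x)); [exact: Good_col | lia].
Qed.

Lemma vclosure_submx (P : set V) p0 k (B : 'M[R]_(k, n)) :
  (forall q, P q -> (q - p0 <= B)%MS) -> forall y, vclosure P y -> (y - p0 <= B)%MS.
Proof.
move=> PB y Py; rewrite submxE; apply/eqP/rowP => j; rewrite [RHS]mxE.
apply/eqP; rewrite -normr_le0.
apply: (ler_addgt0_scale (mx_abs_sum_ge0 (cokermx B))) => e e_gt0.
have [q Pq yq] := Py e e_gt0.
have -> : y - p0 = - (q - y) + (q - p0) by rewrite opprB addrA subrK.
have /eqP qB : (q - p0) *m cokermx B == 0 by rewrite -submxE; apply: PB.
rewrite mulmxDl qB.
by rewrite addr0 add0r mulNmx mxE normrN; apply: norm_mulmx_le.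
Qed.

Section RelativeBall.
Variables (P : set V) (p0 : V) (k : nat) (B : 'M[R]_(k, n)).
Hypothesis convP : vconvex P.

Section Simplex.
Hypotheses (Pp0 : P p0) (PB : forall i, P (p0 + row i B)).

Lemma vconvex_near_barycentre (a : 'I_k -> R) :
  (forall i, `|a i| <= (k.+1%:R ^+ 2)^-1) ->
  P (p0 + \sum_i (k.+1%:R^-1 + a i) *: row i B).
Proof.
move=> a_le; set K : R := k.+1%:R.
have K_ge1 : 1 <= K by rewrite ler1n.
have K2_le : (K ^+ 2)^-1 <= K^-1.
  rewrite lef_pV2 ?posrE ?exprn_gt0 ?(lt_le_trans ltr01) //.
  by rewrite expr2 ler_peMl ?(le_trans ler01).
apply: (vconvex_comb convP Pp0 PB) => [i|].
  have := a_le i; rewrite ler_norml => /andP[a_ge _].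
  by rewrite addrC -lerBlDr sub0r (le_trans _ a_ge) // lerN2.
apply: le_trans (_ : \sum_(i < k) (K^-1 + (K ^+ 2)^-1) <= 1).
  by apply: ler_sum => i _; rewrite lerD2l; have := a_le i; rewrite ler_norml => /andP[].
rewrite sumr_const card_ord -mulr_natl (_ : k%:R = K - 1); last by rewrite /K -natr1 addrK.
have -> : (K - 1) * (K^-1 + (K ^+ 2)^-1) = 1 - (K ^+ 2)^-1 by field; lra.
by rewrite lerBlDr lerDl invr_ge0 exprn_ge0 // (le_trans ler01).
Qed.

Lemma vconvex_rel_ball : exists2 c, P c /\ (c - p0 <= B)%MS &
  exists2 r, 0 < r & forall y, (y - p0 <= B)%MS -> eball c r y -> P y.
Proof.
set K : R := k.+1%:R; set c := p0 + \sum_i K^-1 *: row i B.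
have K2_gt0 : 0 < (K ^+ 2)^-1 by rewrite invr_gt0 exprn_gt0 // ltr0n.
have M1_gt0 : 0 < mx_abs_sum (pinvmx B) + 1 by rewrite ltr_wpDl ?mx_abs_sum_ge0.
set r := (K ^+ 2)^-1 / (mx_abs_sum (pinvmx B) + 1).
have r_gt0 : 0 < r by rewrite divr_gt0.
have cB : (c - p0 <= B)%MS.
  by rewrite addrC addKr; apply: summx_sub => i _; apply/scalemx_sub/row_sub.
exists c; first split => //.
  rewrite /c (eq_bigr (fun i => (K^-1 + 0) *: row i B)) => [|i _]; last by rewrite addr0.
  by apply: vconvex_near_barycentre => i; rewrite normr0 ltW.
exists r => // y yB cy; set a := (y - c) *m pinvmx B.
have ycB : (y - c <= B)%MS.
  have -> : y - c = (y - p0) - (c - p0) by rewrite opprB addrA subrK.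
  by apply: addmx_sub yB _; rewrite -scaleN1r scalemx_sub.
have -> : y = p0 + \sum_i (K^-1 + a 0 i) *: row i B.
  rewrite (eq_bigr _ (fun i _ => scalerDl _ _ _)) big_split /= addrA -/c.
  by rewrite -mulmx_sum_row mulmxKpV // subrKC.
apply: vconvex_near_barycentre => i.
apply: le_trans (norm_mulmx_le (pinvmx B) i r_gt0 cy) _.
by rewrite /r mulrAC ler_pdivrMr // ler_pM2l // lerDl.
Qed.

End Simplex.

Hypothesis BP : forall q, P q -> (q - p0 <= B)%MS.

(* The point is the convex combination of an approximation w' ∈ P of w and of
   c' := c + (w - w') / t, which lies in the relative ball around c. *)
Lemma vclosure_open_segment c r w t : (c - p0 <= B)%MS -> 0 < r ->
  (forall y, (y - p0 <= B)%MS -> eball c r y -> P y) ->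
  vclosure P w -> 0 < t -> P ((1 + t)^-1 *: (w + t *: c)).
Proof.
move=> cB r_gt0 ballP Pw t_gt0.
have [w' Pw' ww'] := Pw (r * t) (mulr_gt0 r_gt0 t_gt0).
set c' := c + t^-1 *: (w - w').
have c'B : (c' - p0 <= B)%MS.
  have -> : c' - p0 = (c - p0) + t^-1 *: ((w - p0) - (w' - p0)).
    by rewrite opprB addrA subrK addrAC.
  apply: addmx_sub cB _; apply/scalemx_sub/addmx_sub; first exact: vclosure_submx Pw.
  by rewrite -scaleN1r scalemx_sub ?BP.
have cc' : eball c r c'.
  rewrite /eball /= addrAC subrr add0r dotvZZ -dotvNN opprB.
  rewrite -(ltr_pM2l (exprn_gt0 2 t_gt0)) mulrA -exprMn divff ?lt0r_neq0 //.
  by rewrite expr1n mul1r -exprMn mulrC.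
have t1_gt0 : 0 < 1 + t by lra.
have t01 : 0 <= (1 + t)^-1 <= 1 by rewrite invr_ge0 invf_le1 ?ltW //; lra.
have := convP Pw' (ballP c' c'B cc') t01.
congr P; apply/rowP => j; rewrite /c' !mxE; field.
by rewrite !lt0r_neq0.
Qed.

End RelativeBall.

Lemma ri_sub_convex_core (P D : set V) :
  vconvex P -> P `<=` D -> D `<=` vclosure P -> ri D `<=` ri P.
Proof.
move=> convP PD DP z [Dz [d d_gt0 ballD]].
have [p0 Pp0 _] := DP z Dz 1 ltr01.
pose Good k (W : 'M_(k, n)) := forall i, P (p0 + row i W).
have Good0 : Good 0%N 0 by case.
have Good_col k (W : 'M_(k, n)) x :
    Good k W -> P (p0 + x) -> ~~ (x <= W)%MS -> Good _ (col_mx W x).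
  move=> PW Px _ i; rewrite -(splitK i).
  by case: (fintype.split i) => j /=; rewrite ?rowKu ?rowKd ?row_id.
have [k [B [PB BP]]] := exists_saturated_mx Good0 Good_col.
have {}BP q : P q -> (q - p0 <= B)%MS by move=> Pq; apply: BP; rewrite subrKC.
have [c [Pc cB] [r r_gt0 ballP]] := vconvex_rel_ball convP Pp0 PB.
(* Push y away from c to a point w of D, then pull it back into P. *)
suff ballP' : eball z (d / 2) `&` aff D `<=` P.
  split; first by apply: ballP'; split; [apply: eball_center; lra | apply: sub_aff].
  exists (d / 2); first lra.
  by move=> y [zy /(aff_subset PD) yA]; apply: ballP'.
move=> y [zy yA]; have d2_gt0 : 0 < d / 2 by lra.
have [t t_gt0 /(_ t) yc_small] := exists_small_scale (y - c) d2_gt0.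
have {}yc_small : dotv (t *: (y - c)) (t *: (y - c)) < (d / 2) ^+ 2.
  by apply: yc_small; rewrite t_gt0 lexx.
set w := y + t *: (y - c).
have Dw : D w.
  apply: ballD; split; last exact: aff_extend yA (PD _ Pc).
  rewrite /eball /= (_ : w - z = (y - z) + t *: (y - c)); last by rewrite addrAC.
  apply: le_lt_trans (dotvDD_le _ _) _.
  have -> : d ^+ 2 = 4 * (d / 2) ^+ 2 by field.
  by move: zy; rewrite /eball /=; lra.
have t1_neq0 : 1 + t != 0 by rewrite lt0r_neq0 //; lra.
have := vclosure_open_segment convP BP cB r_gt0 ballP (DP _ Dw) t_gt0.
by congr P; apply/rowP => j; rewrite /w !mxE; field.
Qed.

End RowSpaces.

Section LinearMinorant.
Variables (R : realType) (n : nat).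
Local Notation V := 'rV[R]_n.

Lemma exists_dual_vector k (W : 'M[R]_(k, n)) (v : V) : ~~ (v <= W)%MS ->
  exists2 u : V, dotv u v = 1 & forall x, (x <= W)%MS -> dotv u x = 0.
Proof.
move=> vW; set K := cokermx W.
have [j vKj] : exists j, (v *m K) 0 j != 0.
  apply/existsP; rewrite -negb_forall; apply: contra vW => /forallP vK0.
  by rewrite submxE; apply/eqP/rowP => j; rewrite [RHS]mxE; apply/eqP; apply: vK0.
have dotK x : dotv (\row_i (K i j / (v *m K) 0 j)) x = (x *m K) 0 j / (v *m K) 0 j.
  by rewrite /dotv [in RHS]mxE mulr_suml; apply: eq_bigr => i _; rewrite mxE mulrC mulrA.
exists (\row_i (K i j / (v *m K) 0 j)) => [|x]; first by rewrite dotK divff.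
by rewrite submxE dotK => /eqP ->; rewrite mxE mul0r.
Qed.

Lemma adds_sub_dotv k (W : 'M[R]_(k, n)) (u v x : V) :
  dotv u v = 1 -> (forall y, (y <= W)%MS -> dotv u y = 0) ->
  (x <= W + v)%MS -> (x - dotv u x *: v <= W)%MS.
Proof.
move=> uv uW /sub_addsmxP [[a b] /= ->].
rewrite [b]mx11_scalar mul_scalar_mx dotvDr dotvZr uv mulr1 uW ?submxMl //.
by rewrite add0r addrK submxMl.
Qed.

Variable C : set (V * R).
Hypotheses (convC : pconvex C) (C0_ge0 : forall s, C (0, s) -> 0 <= s).
Hypothesis absorbC :
  forall x s, C (x, s) -> exists2 e, 0 < e & exists s', C (- (e *: x), s').

Definition minorant_on k (W : 'M[R]_(k, n)) (xi : V) :=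
  forall x s, C (x, s) -> (x <= W)%MS -> dotv xi x <= s.

Section Extension.
Variables (k : nat) (W : 'M[R]_(k, n)) (xi u v : V) (s0 : R).
Hypotheses (xiW : minorant_on W xi) (uv : dotv u v = 1).
Hypotheses (uW : forall x, (x <= W)%MS -> dotv u x = 0) (Cv : C (v, s0)).

Lemma minorant_slope_cross x1 s1 x2 s2 : C (x1, s1) -> C (x2, s2) ->
  (x1 <= W + v)%MS -> (x2 <= W + v)%MS -> 0 < dotv u x1 -> dotv u x2 < 0 ->
  (s1 - dotv xi x1) * dotv u x2 <= (s2 - dotv xi x2) * dotv u x1.
Proof.
move=> C1 C2 x1W x2W T1_gt0 T2_lt0.
set T1 := dotv u x1 in T1_gt0 *; set T2 := dotv u x2 in T2_lt0 *.
set a1 := s1 - dotv xi x1; set a2 := s2 - dotv xi x2.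
have T12_gt0 : 0 < T1 - T2 by lra.
set al := - T2 / (T1 - T2).
have al01 : 0 <= al <= 1.
  by apply/andP; split; [apply: divr_ge0 | rewrite ler_pdivrMr // mul1r]; lra.
set x := al *: x1 + (1 - al) *: x2.
have ux : dotv u x = 0 by rewrite dotvDr !dotvZr -/T1 -/T2 /al; field; lra.
have xW : (x <= W)%MS.
  have := adds_sub_dotv uv uW (_ : (x <= W + v)%MS); rewrite ux scale0r subr0.
  by apply; apply: addmx_sub; apply: scalemx_sub.
have := xiW (convC C1 C2 al01) xW; rewrite /= dotvDr !dotvZr => xi_le.
have : 0 <= (T1 - T2) * (al * a1 + (1 - al) * a2).
  by rewrite mulr_ge0 ?(ltW T12_gt0) // /a1 /a2 !mulrBr; lra.
have -> : (T1 - T2) * (al * a1 + (1 - al) * a2) = T1 * a2 - T2 * a1.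
  by rewrite /al; field; lra.
by rewrite subr_ge0 mulrC [T1 * _]mulrC.
Qed.

(* The value c of the extension on u is squeezed between the slopes
   (s - <xi, x>) / <u, x> of the points of C on either side of W. *)
Lemma minorant_extend : exists c, minorant_on (W + v)%MS (xi + c *: u).
Proof.
pose slope x s := (s - dotv xi x) / dotv u x.
pose Lo := [set r | exists x s,
  [/\ C (x, s), (x <= W + v)%MS, dotv u x < 0 & r = slope x s]].
pose Up := [set r | exists x s,
  [/\ C (x, s), (x <= W + v)%MS, 0 < dotv u x & r = slope x s]].
have [c [Lo_le le_Up]] : exists c, ubound Lo c /\ lbound Up c.
  apply: exists_between.
  - have [e e_gt0 [s' Cv']] := absorbC Cv.
    exists (slope (- (e *: v)) s'), (- (e *: v)), s'; split => //.
      by rewrite -scaleNr scalemx_sub // addsmxSr.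
    by rewrite dotvNr dotvZr uv mulr1 oppr_lt0.
  - by exists (slope v s0), v, s0; split; rewrite ?addsmxSr ?uv.
  move=> _ _ [x2 [s2 [C2 x2W T2_lt0 ->]]] [x1 [s1 [C1 x1W T1_gt0 ->]]].
  rewrite /slope ler_ndivrMr // mulrAC ler_pdivrMr //.
  exact: minorant_slope_cross.
exists c => x s Cx xWv; rewrite dotvDl dotvZl.
have [T_lt0|T_gt0|T0] := ltgtP (dotv u x) 0.
- have : slope x s <= c by apply: Lo_le; exists x, s.
  by rewrite /slope ler_ndivrMr //; lra.
- have : c <= slope x s by apply: le_Up; exists x, s.
  by rewrite /slope ler_pdivlMr //; lra.
- rewrite T0 mulr0 addr0; apply: xiW Cx _.
  by have := adds_sub_dotv uv uW xWv; rewrite T0 scale0r subr0.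
Qed.

End Extension.

Lemma minorant_on_col_mx k (W : 'M[R]_(k, n)) xi x s :
  minorant_on W xi -> C (x, s) -> ~~ (x <= W)%MS ->
  exists xi', minorant_on (col_mx W x) xi'.
Proof.
move=> xiW Cx xW; have [u uv uW] := exists_dual_vector xW.
have [c xi'W] := minorant_extend xiW uv uW Cx.
by exists (xi + c *: u) => y t Cy; rewrite -addsmxE; apply: xi'W.
Qed.

Lemma exists_linear_minorant : exists xi, forall x s, C (x, s) -> dotv xi x <= s.
Proof.
pose Good k (W : 'M_(k, n)) := exists xi, minorant_on W xi.
have Good0 : Good 0%N 0.
  by exists 0 => x s Cx /submx0null x0; move: Cx; rewrite x0 dotv0r; apply: C0_ge0.
have Good_col k (W : 'M_(k, n)) x :
    Good k W -> (exists s, C (x, s)) -> ~~ (x <= W)%MS -> Good _ (col_mx W x).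
  by move=> [xi xiW] [s Cx]; apply: minorant_on_col_mx xiW Cx.
have [k [W [[xi xiW] CW]]] := exists_saturated_mx Good0 Good_col.
by exists xi => x s Cx; apply: xiW Cx (CW _ (ex_intro _ s Cx)).
Qed.

End LinearMinorant.

Section Subdifferential.
Variables (R : realType) (n : nat).
Local Notation V := 'rV[R]_n.
Implicit Types (phi : V -> \bar R) (E : set (V * R)).

Lemma fineK_dom phi x : phi x <> -oo%E -> dom phi x -> phi x = (fine (phi x))%:E.
Proof. by rewrite /dom /=; case: (phi x) => [r| |] // _; rewrite ltxx. Qed.

Lemma epi_dom phi x l : epi phi (x, l) -> dom phi x.
Proof. by rewrite /epi /dom /= => /le_lt_trans; apply; apply: ltry. Qed.

Lemma dom_epi phi x : dom phi x -> exists l, epi phi (x, l).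
Proof.
rewrite /dom /epi /=; case: (phi x) => [r _| |_]; first by exists r.
  by rewrite ltxx.
by exists 0; rewrite leNye.
Qed.

Lemma pconvex_fst E : pconvex E -> vconvex (fst @` E).
Proof.
move=> convE _ _ [[a la] Ea <-] [[b lb] Eb <-] t t01.
exists (t *: a + (1 - t) *: b, t * la + (1 - t) * lb) => //.
exact: (convE _ _ Ea Eb t t01).
Qed.

Lemma dist2p_eball (p q : V * R) e : dist2p p q < e ^+ 2 -> eball q.1 e p.1.
Proof. by apply: le_lt_trans; rewrite /dist2p lerDl sqr_ge0. Qed.

Lemma dist2p_snd_lt (p q : V * R) e : 0 < e -> dist2p p q < e ^+ 2 -> `|p.2 - q.2| < e.
Proof.
move=> e_gt0 pq; have : (p.2 - q.2) ^+ 2 < e ^+ 2.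
  by apply: le_lt_trans pq; rewrite /dist2p lerDr dotv_ge0.
by move=> pq2; rewrite ltr_norml; apply/andP; split; nra.
Qed.

Lemma dom_sub_vclosure_fst phi E :
  epi phi `<=` pclosure E -> dom phi `<=` vclosure (fst @` E).
Proof.
move=> epiE x /dom_epi [l /epiE xlE] e e_gt0.
have [[q lq] Eq xq] := xlE e e_gt0.
by exists q; [exists (q, lq) | apply/eball_sym/(dist2p_eball xq)].
Qed.

Lemma ri_dom_sub_ri_fst phi E : pconvex E -> E `<=` epi phi -> epi phi `<=` pclosure E ->
  ri (dom phi) `<=` ri (fst @` E).
Proof.
move=> convE Eepi epiE.
apply: ri_sub_convex_core (pconvex_fst convE) _ (dom_sub_vclosure_fst epiE).
by move=> _ [[x l] /Eepi /epi_dom domx <-].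
Qed.

Lemma pclosure_dotv_le E (eta : V) c :
  (forall x l, E (x, l) -> dotv eta x <= l + c) ->
  forall x l, pclosure E (x, l) -> dotv eta x <= l + c.
Proof.
move=> E_le x l xlE; have S_ge0 : 0 <= \sum_i `|eta 0 i| by apply: sumr_ge0.
apply: (@ler_addgt0_scale _ _ _ (1 + \sum_i `|eta 0 i|)) => [|e e_gt0]; first lra.
have [[q lq] Eq xq] := xlE e e_gt0.
have := norm_dotv_le eta e_gt0 (dist2p_eball xq); have := dist2p_snd_lt e_gt0 xq.
have := E_le _ _ Eq; rewrite /= dotvBr mulrDr mulr1 ler_norml ltr_norml.
by move=> ? /andP[? ?] /andP[? ?]; lra.
Qed.

Lemma subdiff_epi phi xb a (eta : V) : phi xb = a%:E ->
  (forall x l, epi phi (x, l) -> dotv eta (x - xb) <= l - a) -> subdiff phi xb eta.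
Proof.
move=> phi_xb eta_le; split=> [|x]; first by rewrite /dom /= phi_xb ltry.
rewrite phi_xb; case phi_x: (phi x) => [r| |] /=; last 2 first.
- by rewrite leey.
- have := eta_le x (dotv eta (x - xb) + a - 1); rewrite /epi /= phi_x leNye.
  by move=> /(_ isT) absurd; exfalso; clear -absurd; lra.
by rewrite lee_fin; apply: eta_le; rewrite /epi /= phi_x.
Qed.

Lemma msum_subdiff_sub phi1 phi2 xb a1 a2 : phi1 xb = a1%:E -> phi2 xb = a2%:E ->
  msum (subdiff phi1 xb) (subdiff phi2 xb) `<=`
  subdiff (fun x => (phi1 x + phi2 x)%E) xb.
Proof.
move=> phi1_xb phi2_xb _ [xi1 [xi2 [[_ xi1_le] [[_ xi2_le] ->]]]].
split=> [|x]; first by rewrite /dom /= phi1_xb phi2_xb ltry.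
have := leeD (xi1_le x) (xi2_le x).
by rewrite phi1_xb phi2_xb dotvDl EFinD addeACA oppeD.
Qed.

End Subdifferential.

Section SubgradientGap.
Variables (R : realType) (n : nat).
Local Notation V := 'rV[R]_n.
Variables (E1 E2 : set (V * R)) (a : R) (xi xb : V).

Definition subgrad_gap : set (V * R) :=
  [set p | exists u l w m,
     [/\ E1 (u, l), E2 (w, m) & p = (u - w, l + m - a - dotv xi (w - xb))]].

Lemma pconvex_subgrad_gap : pconvex E1 -> pconvex E2 -> pconvex subgrad_gap.
Proof.
move=> convE1 convE2 _ _ [u [l [w [m [Eul Ewm ->]]]]]
  [u' [l' [w' [m' [Eul' Ewm' ->]]]]] t t01.
exists (t *: u + (1 - t) *: u'), (t * l + (1 - t) * l'),
  (t *: w + (1 - t) *: w'), (t * m + (1 - t) * m'); split.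
- exact: (convE1 _ _ Eul Eul' t t01).
- exact: (convE2 _ _ Ewm Ewm' t t01).
congr pair; first by apply/rowP => j; rewrite !mxE; ring.
by rewrite /= !dotvBr !dotvDr !dotvZr; ring.
Qed.

Lemma subgrad_gap_absorbing z : ri (fst @` E1) z -> ri (fst @` E2) z ->
  forall x s, subgrad_gap (x, s) ->
  exists2 e, 0 < e & exists s', subgrad_gap (- (e *: x), s').
Proof.
move=> z1 z2 _ s [u [l [w [m [Eul Ewm [-> _]]]]]].
have [e1 e1_gt0 ext1] := ri_extend z1 (ex_intro2 _ _ _ Eul erefl).
have [e2 e2_gt0 ext2] := ri_extend z2 (ex_intro2 _ _ _ Ewm erefl).
set e := Num.min e1 e2.
have e_gt0 : 0 < e by rewrite lt_min e1_gt0.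
have [[y1 l1] E1y1 /= y1E] : (fst @` E1) (z + e *: (z - u)).
  by apply: ext1; rewrite e_gt0 ge_min lexx.
have [[y2 l2] E2y2 /= y2E] : (fst @` E2) (z + e *: (z - w)).
  by apply: ext2; rewrite e_gt0 ge_min lexx orbT.
exists e => //; exists (l1 + l2 - a - dotv xi (y2 - xb)), y1, l1, y2, l2; split => //.
by congr pair; rewrite y1E y2E; apply/rowP => j; rewrite !mxE; ring.
Qed.

Lemma subgrad_gap0_ge0 (phi1 phi2 : V -> \bar R) :
  (phi1 xb + phi2 xb)%E = a%:E -> E1 `<=` epi phi1 -> E2 `<=` epi phi2 ->
  subdiff (fun x => (phi1 x + phi2 x)%E) xb xi ->
  forall s, subgrad_gap (0, s) -> 0 <= s.
Proof.
move=> phi_xb E1epi E2epi [_ xi_le] s [u [l [w [m [E1ul E2wm [/esym]]]]]].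
move/eqP; rewrite subr_eq0 => /eqP uw ->; rewrite uw in E1ul.
have /= ul := E1epi _ E1ul; have /= wm := E2epi _ E2wm.
have := le_trans (xi_le w) (leeB (leeD ul wm) (lexx (phi1 xb + phi2 xb)%E)).
by rewrite phi_xb /= lee_fin; lra.
Qed.

Lemma subgrad_gap_minorant_closure (xi1 : V) :
  (forall x s, subgrad_gap (x, s) -> dotv xi1 x <= s) ->
  forall u l w m, pclosure E1 (u, l) -> pclosure E2 (w, m) ->
  dotv xi1 (u - w) <= l + m - a - dotv xi (w - xb).
Proof.
move=> xi1_le u l w m ul wm.
have E1_le u' l' : E1 (u', l') -> dotv xi1 (u' - w) <= l' + m - a - dotv xi (w - xb).
  move=> E1u'; suff : dotv (xi - xi1) w <= m + (l' - a + dotv xi xb - dotv xi1 u').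
    by rewrite !dotvBr dotvBl; lra.
  apply: pclosure_dotv_le wm => w' m' E2w'.
  have : dotv xi1 (u' - w') <= l' + m' - a - dotv xi (w' - xb).
    by apply: xi1_le; exists u', l', w', m'.
  by rewrite !dotvBr dotvBl; lra.
suff : dotv xi1 u <= l + (m - a - dotv xi (w - xb) + dotv xi1 w) by rewrite !dotvBr; lra.
by apply: pclosure_dotv_le ul => u' l' /E1_le; rewrite !dotvBr; lra.
Qed.

End SubgradientGap.

Lemma subdiff_add_sub_msum (R : realType) (n : nat) (phi1 phi2 : 'rV[R]_n -> \bar R)
    (E1 E2 : set ('rV[R]_n * R)) xb a1 a2 :
  pconvex E1 -> E1 `<=` epi phi1 -> epi phi1 `<=` pclosure E1 ->
  pconvex E2 -> E2 `<=` epi phi2 -> epi phi2 `<=` pclosure E2 ->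
  ri (fst @` E1) `&` ri (fst @` E2) !=set0 -> phi1 xb = a1%:E -> phi2 xb = a2%:E ->
  subdiff (fun x => (phi1 x + phi2 x)%E) xb `<=` msum (subdiff phi1 xb) (subdiff phi2 xb).
Proof.
move=> convE1 E1epi epiE1 convE2 E2epi epiE2 [z [z1 z2]] phi1_xb phi2_xb xi xi_sub.
have phi_xb : (phi1 xb + phi2 xb)%E = (a1 + a2)%:E by rewrite phi1_xb phi2_xb.
have [xi1 xi1_le] := exists_linear_minorant
  (pconvex_subgrad_gap (a := a1 + a2) (xi := xi) (xb := xb) convE1 convE2)
  (subgrad_gap0_ge0 phi_xb E1epi E2epi xi_sub) (subgrad_gap_absorbing z1 z2).
have gap_le u l w m : epi phi1 (u, l) -> epi phi2 (w, m) ->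
    dotv xi1 (u - w) <= l + m - (a1 + a2) - dotv xi (w - xb).
  by move=> /epiE1 ul /epiE2 wm; apply: subgrad_gap_minorant_closure xi1_le _ _ _ _ ul wm.
have epi_xb phi a : phi xb = a%:E -> epi phi (xb, a).
  by move=> phi_xb'; rewrite /epi /= phi_xb'.
exists xi1, (xi - xi1); split; [|split; last by rewrite addrC subrK].
- apply: subdiff_epi phi1_xb _ => x l xl.
  by have := gap_le _ _ _ _ xl (epi_xb _ _ phi2_xb); rewrite subrr dotv0r; lra.
- apply: subdiff_epi phi2_xb _ => x m xm.
  by have := gap_le _ _ _ _ (epi_xb _ _ phi1_xb) xm; rewrite !dotvBr !dotvBl; lra.
Qed.

Theorem mainTheorem4 (R : realType) (n : nat) (phi1 phi2 : 'rV[R]_n -> \bar R) :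
  proper_fun phi1 -> proper_fun phi2 ->
  nearly_convex_fun phi1 -> nearly_convex_fun phi2 ->
  (ri (dom phi1) `&` ri (dom phi2)) !=set0 ->
  forall xb : 'rV[R]_n, dom phi1 xb -> dom phi2 xb ->
    subdiff (fun x => (phi1 x + phi2 x)%E) xb =
    msum (subdiff phi1 xb) (subdiff phi2 xb).
Proof.
move=> [_ phi1_fin] [_ phi2_fin] [E1 [convE1 [E1epi epiE1]]] [E2 [convE2 [E2epi epiE2]]].
move=> [z [z1 z2]] xb dom1 dom2.
have phi1_xb := fineK_dom (phi1_fin xb) dom1; have phi2_xb := fineK_dom (phi2_fin xb) dom2.
have ri12 : ri (fst @` E1) `&` ri (fst @` E2) !=set0.
  by exists z; split; [exact: ri_dom_sub_ri_fst convE1 E1epi epiE1 _ z1 |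
                       exact: ri_dom_sub_ri_fst convE2 E2epi epiE2 _ z2].
apply/seteqP; split; last exact: msum_subdiff_sub phi1_xb phi2_xb.
exact: subdiff_add_sub_msum convE1 E1epi epiE1 convE2 E2epi epiE2 ri12 phi1_xb phi2_xb.
Qed.
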